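(* Let $n=|V|\ge4$ and let $G$ be a relationship network on $V$ satisfying structural balance, known to the designer. Then there exists a valid mechanism that is efficient and DSIC if and only if either $G$ has exactly one F-component (i.e. all pairs of agents are friends) or $G$ has at least three EF-components.
   Context: A relationship network on $V=\{1,\dots,n\}$ assigns to every unordered pair of distinct agents exactly one of the symmetric relations friends, enemies, impartial; $F_i,E_i,I_i$ denote the friends, enemies, impartials of $i$. Structural balance: for all pairwise distinct $i,j,k$: $j\in F_i, k\in F_j\Rightarrow k\in F_i$; $j\in E_i,k\in E_j\Rightarrow k\in F_i$; $j\in E_i,k\in F_j\Rightarrow k\in E_i$. An EF-component is a connected component of the graph whose edges are friend or enemy pairs; an F-component is a connected component of the graph whose edges are friend pairs. Preferences: fix $w_f,w_e>0$; $p\succ_i p'$ iff $p_i>p'_i$, or $p_i=p'_i$ and $w_f\sum_{j\in F_i}(p_j-p'_j)-w_e\sum_{j\in E_i}(p_j-p'_j)>0$; $p\succsim_ip'$ means not $p'\succ_ip$. Known-network setting: each agent $i$ sends a message $m_i\subseteq V$ (the agents it reports as needy). A mechanism is $g:(2^V)^V\to[0,1]^V$ (it may depend on the known network); it is valid if $\sum_ig_i(\mathbf m)\le1$ for all $\mathbf m$; DSIC if for all $i$, all profiles $\mathbf m$ and all $m'_i\subseteq V$, $g(\mathbf m)\succsim_i g(m'_i,\mathbf m_{-i})$; efficient if for every nonempty $N\subseteq V$, at the truthful profile $m_j=N$ for all $j$, $\sum_{i\in N}g_i(\mathbf m)=1$. *)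

(* reals as an abstract realType (all realTypes are isomorphic to R). *)
From HB Require Import structures.
From mathcomp Require Import all_boot all_order all_algebra.
From mathcomp Require Import reals.
Set Implicit Arguments. Unset Strict Implicit. Unset Printing Implicit Defensive.
Import Order.TTheory GRing.Theory Num.Theory.
Local Open Scope ring_scope.

Inductive relation3 := Friends | Enemies | Impartial.

Definition is_friend (r : relation3) : bool :=
  match r with Friends => true | _ => false end.
Definition is_enemy (r : relation3) : bool :=
  match r with Enemies => true | _ => false end.

(* A relationship network on V = 'I_n: G i j is the relation between i and j
   (only meaningful for i <> j). *)
Definition network (n : nat) := 'I_n -> 'I_n -> relation3.

Definition net_symmetric n (G : network n) : Prop :=
  forall i j : 'I_n, i != j -> G i j = G j i.

Definition structurally_balanced n (G : network n) : Prop :=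
  forall i j k : 'I_n, i != j -> j != k -> i != k ->
    (G i j = Friends -> G j k = Friends -> G i k = Friends) /\
    (G i j = Enemies -> G j k = Enemies -> G i k = Friends) /\
    (G i j = Enemies -> G j k = Friends -> G i k = Enemies).

Definition friends n (G : network n) (i : 'I_n) : {set 'I_n} :=
  [set j | (j != i) && is_friend (G i j)].
Definition enemies n (G : network n) (i : 'I_n) : {set 'I_n} :=
  [set j | (j != i) && is_enemy (G i j)].

Definition F_edge n (G : network n) : rel 'I_n :=
  fun i j => (i != j) && is_friend (G i j).
Definition EF_edge n (G : network n) : rel 'I_n :=
  fun i j => (i != j) && (is_friend (G i j) || is_enemy (G i j)).

Definition num_components n (e : rel 'I_n) : nat :=
  #|[set [set y | connect e x y] | x : 'I_n]|.

Definition num_F_components n (G : network n) := num_components (F_edge G).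
Definition num_EF_components n (G : network n) := num_components (EF_edge G).

Definition profile n := {ffun 'I_n -> {set 'I_n}}.
Definition mechanism (R : realType) n := profile n -> 'I_n -> R.

Definition spref (R : realType) n (wf we : R) (G : network n) (i : 'I_n)
    (p p' : 'I_n -> R) : Prop :=
  p' i < p i \/
  (p i = p' i /\
   0 < wf * (\sum_(j in friends G i) (p j - p' j))
       - we * (\sum_(j in enemies G i) (p j - p' j))).

Definition wpref (R : realType) n (wf we : R) (G : network n) (i : 'I_n)
    (p p' : 'I_n -> R) : Prop := ~ spref wf we G i p' p.

Definition deviate n (m : profile n) (i : 'I_n) (mi : {set 'I_n}) : profile n :=
  [ffun j => if j == i then mi else m j].

Definition valid (R : realType) n (g : mechanism R n) : Prop :=
  (forall m i, 0 <= g m i <= 1) /\ (forall m, \sum_(i < n) g m i <= 1).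

Definition DSIC (R : realType) n (wf we : R) (G : network n) (g : mechanism R n) : Prop :=
  forall (i : 'I_n) (m : profile n) (mi : {set 'I_n}),
    wpref wf we G i (g m) (g (deviate m i mi)).

Definition efficient (R : realType) n (g : mechanism R n) : Prop :=
  forall N : {set 'I_n}, N != set0 ->
    \sum_(i in N) g [ffun _ => N] i = 1.

From HB Require Import structures.
From mathcomp Require Import all_boot all_order all_algebra.
From mathcomp Require Import reals.
From mathcomp Require Import lra.
Import Order.TTheory GRing.Theory Num.Theory.
Local Open Scope ring_scope.
Set Implicit Arguments. Unset Strict Implicit.

(* Balance splits the EF-component of an agent a into its friend clique
   K(a) = {a} ∪ F_a and its enemies E(a), and every member of K(a) (resp. E(a))
   has friends K(a) (resp. E(a)) minus itself and enemies E(a) (resp. K(a)).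
   Under DSIC a deviation changes neither the deviator's share nor its
   friends-minus-enemies score, so writing X(S) for the probability given to S,
   wf X(K(a)) - we X(E(a)) is unaffected by members of K(a) and
   wf X(E(a)) - we X(K(a)) by members of E(a). Efficiency at the profile where
   everybody reports {a} gives X(K(a)) = 1, and the two invariants propagate
   X(K(a)) >= 1 to every profile reporting {a} outside the EF-component of a.
   With several F-components but at most two EF-components there are two
   disjoint cliques K(a), K(d) whose EF-components cover V, and the profile
   reporting {d} on the component of a and {a} elsewhere gives both mass 1.
   Conversely, with representatives r_0, r_1, r_2 of three EF-components, agent j
   gets its share of N when the two representatives outside its component both
   report N; nobody influences the payoff of anyone it cares about, and two
   agreeing reports are the majority report, so the total is at most 1. If all
   agents are friends, three agents act as mutual referees and a fourth one,
   never a referee, receives the remainder, so everyone's own share is fixed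
   and its friends receive the rest. *)

Section Components.

Variables (n : nat) (e : rel 'I_n).

Lemma mem_components x :
  [set y | connect e x y] \in [set [set y | connect e x y] | x : 'I_n].
Proof. exact: imset_f. Qed.

Lemma eq_component_connect x y :
  [set z | connect e x z] = [set z | connect e y z] -> connect e x y.
Proof.
move=> Cxy; have : y \in [set z | connect e y z] by rewrite inE connect0.
by rewrite -Cxy inE.
Qed.

Lemma num_components_eq1 : (0 < n)%N ->
  num_components e = 1%N <-> forall x y, connect e x y.
Proof.
move=> n_gt0; split => [/eqP/cards1P[C defC] x y | connect_all].
  apply: eq_component_connect.
  by have := mem_components x; have := mem_components y; rewrite defC !inE => /eqP-> /eqP->.
apply/eqP/cards1P; exists setT; apply/setP => C; rewrite inE.
apply/imsetP/eqP => [[x _ ->] | ->]; last exists (Ordinal n_gt0) => //.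
all: by apply/setP => y; rewrite !inE connect_all.
Qed.

Lemma num_components_neq1 : (0 < n)%N -> num_components e != 1%N ->
  exists x y, ~~ connect e x y.
Proof.
move=> n_gt0 e_ne1; have : ~~ [forall x, forall y, connect e x y].
  apply: contra_neqN e_ne1 => /forallP e_all; apply/num_components_eq1 => // x y.
  exact: forallP (e_all x) y.
by rewrite negb_forall => /existsP[x]; rewrite negb_forall => /existsP[y]; exists x, y.
Qed.

Lemma disconnected3_num_components x y z :
  ~~ connect e x y -> ~~ connect e y z -> ~~ connect e x z -> (3 <= num_components e)%N.
Proof.
pose C x := [set w | connect e x w].
have neqC u v : ~~ connect e u v -> C u != C v by apply: contra => /eqP/eq_component_connect.
move=> /neqC Cxy /neqC Cyz /neqC Cxz.
have sub : C x |: (C y |: [set C z]) \subset [set C x | x : 'I_n].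
  by apply/subsetP => D /setU1P[-> | /setU1P[-> | /set1P->]]; apply: mem_components.
apply: leq_trans (subset_leq_card sub).
by rewrite !cardsU1 cards1 !inE (negPf Cxy) (negPf Cxz) (negPf Cyz).
Qed.

Lemma num_components_disconnected3 : connect_sym e -> (3 <= num_components e)%N ->
  exists r : 'I_3 -> 'I_n, forall k k', k != k' -> ~~ connect e (r k) (r k').
Proof.
move=> e_sym; rewrite /num_components cardE => size_enum.
pose C (k : 'I_3) := nth set0 (enum [set [set y | connect e x y] | x : 'I_n]) k.
have CP k : exists x, [set y | connect e x y] = C k.
  have /(mem_nth set0) : (k < size (enum [set [set y | connect e x y] | x : 'I_n]))%N.
    exact: leq_trans (ltn_ord k) size_enum.
  by rewrite mem_enum => /imsetP[x _ Ck]; exists x; rewrite /C Ck.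
have [r defC] := fin_all_exists CP.
exists r => k k' kk'; apply: contra kk' => /(same_connect e_sym) connect_rr'.
have : C k = C k' by rewrite -(defC k) -(defC k'); apply/setP => y; rewrite !inE connect_rr'.
by rewrite /C => /eqP; rewrite nth_uniq ?enum_uniq // ?(leq_trans (ltn_ord _) size_enum).
Qed.

End Components.

Definition rel_mul (r s : relation3) : relation3 :=
  match r, s with
  | Friends, _ => s
  | Enemies, Friends => Enemies
  | Enemies, Enemies => Friends
  | _, _ => Impartial
  end.

Definition related (r : relation3) : bool := is_friend r || is_enemy r.

Lemma related_rel_mul r s : related (rel_mul r s) = related r && related s.
Proof. by case: r; case: s. Qed.

Definition friend_clique n (G : network n) (a : 'I_n) : {set 'I_n} :=
  a |: friends G a.

Section Balance.

Variables (n : nat) (G : network n).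
Hypotheses (G_sym : net_symmetric G) (G_bal : structurally_balanced G).

Lemma balanced_rel_mul_related (x y z : 'I_n) : x != y -> y != z -> x != z ->
  related (G x y) -> related (G y z) -> G x z = rel_mul (G x y) (G y z).
Proof.
move=> xy yz xz; have [FF [EE EF]] := G_bal xy yz xz.
have zy : z != y by rewrite eq_sym.
have yx : y != x by rewrite eq_sym.
have zx : z != x by rewrite eq_sym.
have [_ [_ FE]] := G_bal zy yx zx.
rewrite (G_sym zy) (G_sym yx) (G_sym zx) in FE.
by case: (G x y) FF EE EF FE => //; case: (G y z) => // FF EE EF FE _ _; auto.
Qed.

Lemma balanced_rel_mul (x y z : 'I_n) : x != y -> y != z -> x != z ->
  related (G x y) -> G x z = rel_mul (G x y) (G y z).
Proof.
move=> xy yz xz Rxy; have [Ryz | nRyz] := boolP (related (G y z)).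
  exact: balanced_rel_mul_related.
have yx : y != x by rewrite eq_sym.
have Ryx : related (G y x) by rewrite -(G_sym xy).
have : ~~ related (G x z).
  apply: contra nRyz => Rxz.
  by rewrite (balanced_rel_mul_related yx xz yz Ryx Rxz) related_rel_mul Ryx.
by case: (G x z) => //; case: (G y z) nRyz => //; case: (G x y).
Qed.

Lemma balanced_through (a i j : 'I_n) : i != a -> j != i -> j != a ->
  related (G a i) -> G i j = rel_mul (G a i) (G a j).
Proof.
move=> ia ji ja; rewrite -(G_sym ia) => Ria.
by apply: balanced_rel_mul; rewrite // eq_sym.
Qed.

Lemma friends_friend_clique a i :
  i \in friend_clique G a -> friends G i = friend_clique G a :\ i.
Proof.
rewrite !inE => /predU1P[-> | /andP[ia Fai]].
  by apply/setP => j; rewrite !inE; case: eqVneq.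
have Eai : G a i = Friends by case: (G a i) Fai.
apply/setP => j; rewrite !inE; case: (eqVneq j i) => //= ji.
case: (eqVneq j a) => [-> | ja] /=; first by rewrite (G_sym ia) Eai.
by rewrite (balanced_through ia ji ja) Eai.
Qed.

Lemma enemies_friend_clique a i :
  i \in friend_clique G a -> enemies G i = enemies G a.
Proof.
rewrite !inE => /predU1P[-> // | /andP[ia Fai]].
have Eai : G a i = Friends by case: (G a i) Fai.
apply/setP => j; rewrite !inE; case: (eqVneq j i) => [-> | ji] /=; first by rewrite ia Eai.
case: (eqVneq j a) => [-> | ja] /=; first by rewrite (G_sym ia) Eai.
by rewrite (balanced_through ia ji ja) Eai.
Qed.

Lemma friends_enemy a i : i \in enemies G a -> friends G i = enemies G a :\ i.
Proof.
rewrite !inE => /andP[ia Eai]; have {}Eai : G a i = Enemies by case: (G a i) Eai.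
apply/setP => j; rewrite !inE; case: (eqVneq j i) => //= ji.
case: (eqVneq j a) => [-> | ja] /=; first by rewrite (G_sym ia) Eai.
by rewrite (balanced_through ia ji ja) Eai; case: (G a j).
Qed.

Lemma enemies_enemy a i : i \in enemies G a -> enemies G i = friend_clique G a.
Proof.
rewrite !inE => /andP[ia Eai]; have {}Eai : G a i = Enemies by case: (G a i) Eai.
apply/setP => j; rewrite !inE; case: (eqVneq j i) => [-> | ji] /=.
  by rewrite (negPf ia) Eai.
case: (eqVneq j a) => [-> | ja] /=; first by rewrite (G_sym ia) Eai.
by rewrite (balanced_through ia ji ja) Eai; case: (G a j).
Qed.

Lemma friend_clique_enemy a d : d \in enemies G a -> friend_clique G d = enemies G a.
Proof. by move=> dE; rewrite /friend_clique (friends_enemy dE) setD1K. Qed.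

Lemma EF_edge_sym : symmetric (EF_edge G).
Proof. by move=> i j; rewrite /EF_edge eq_sym; case: eqVneq => // /G_sym ->. Qed.

Lemma F_edge_sym : symmetric (F_edge G).
Proof. by move=> i j; rewrite /F_edge eq_sym; case: eqVneq => // /G_sym ->. Qed.

Lemma F_connectE a x : connect (F_edge G) a x = (x \in friend_clique G a).
Proof.
apply/idP/idP => [| /setU1P[-> | ]]; last 2 first.
- exact: connect0.
- by rewrite inE => /andP[xa Fx]; apply: connect1; rewrite /F_edge eq_sym xa.
have cl : closed (F_edge G) (friend_clique G a).
  apply: (intro_closed (sym_connect_sym F_edge_sym)) => u v /andP[uv Fuv] Ku.
  have : v \in friends G u by rewrite inE eq_sym uv.
  by rewrite (friends_friend_clique Ku) => /setD1P[].
by move/(closed_connect cl) <-; apply: setU11.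
Qed.

Lemma EF_connectE a x :
  connect (EF_edge G) a x = (x \in friend_clique G a :|: enemies G a).
Proof.
apply/idP/idP => [| /setUP[/setU1P[-> | ] | ]]; last 3 first.
- exact: connect0.
- by rewrite inE => /andP[xa Fx]; apply: connect1; rewrite /EF_edge eq_sym xa Fx.
- by rewrite inE => /andP[xa Ex]; apply: connect1; rewrite /EF_edge eq_sym xa Ex orbT.
have cl : closed (EF_edge G) (friend_clique G a :|: enemies G a).
  apply: (intro_closed (sym_connect_sym EF_edge_sym)) => u v /andP[uv Ruv] /setUP Uu.
  have : (v \in friends G u) || (v \in enemies G u) by rewrite !inE eq_sym uv.
  case: Uu => [Ku | Eu].
    rewrite in_setU (friends_friend_clique Ku) (enemies_friend_clique Ku).
    by case/orP => [/setD1P[_ ->] | ->]; rewrite ?orbT.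
  rewrite in_setU (friends_enemy Eu) (enemies_enemy Eu).
  by case/orP => [/setD1P[_ ->] | ->]; rewrite ?orbT.
by move/(closed_connect cl) <-; rewrite in_setU setU11.
Qed.

Lemma disjoint_friend_cliques a x :
  ~~ connect (EF_edge G) a x -> [disjoint friend_clique G a & friend_clique G x].
Proof.
move=> nax; rewrite disjoint_subset; apply/subsetP => y ya; rewrite inE.
apply: contra nax => yx; apply: (connect_trans (y := y)).
  by rewrite EF_connectE in_setU ya.
by rewrite (sym_connect_sym EF_edge_sym) EF_connectE in_setU yx.
Qed.

End Balance.

Lemma friend_clique_id n (G : network n) a : a \in friend_clique G a.
Proof. exact: setU11. Qed.

Lemma disjoint_friend_clique_enemies n (G : network n) a :
  [disjoint friend_clique G a & enemies G a].
Proof.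
rewrite -setI_eq0; apply/eqP/setP => x; rewrite !inE.
by case: (eqVneq x a) => //= _; case: (G a x).
Qed.

Lemma DSIC_deviate (R : realType) n (wf we : R) (G : network n) (g : mechanism R n) :
  DSIC wf we G g -> forall i m mi,
  g (deviate m i mi) i = g m i /\
  wf * \sum_(j in friends G i) g (deviate m i mi) j
    - we * \sum_(j in enemies G i) g (deviate m i mi) j
  = wf * \sum_(j in friends G i) g m j - we * \sum_(j in enemies G i) g m j.
Proof.
(* Deviating back from [m'] to [m] is unprofitable too, so [i] is indifferent. *)
move=> g_DSIC i m mi; set m' := deviate m i mi.
have back : deviate m' i (m i) = m.
  by apply/ffunP => k; rewrite !ffunE; case: eqVneq => [-> |].
have := g_DSIC i m mi; have := g_DSIC i m' (m i).
rewrite back /wpref /spref -/m' !sumrB => no_gain_back no_gain.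
have le1 : g m' i <= g m i by rewrite leNgt; apply/negP => lt; apply: no_gain; left.
have le2 : g m i <= g m' i by rewrite leNgt; apply/negP => lt; apply: no_gain_back; left.
have e : g m' i = g m i by apply/eqP; rewrite eq_le le1 le2.
have /negP nD1 := fun D => no_gain (or_intror (conj e D)).
have /negP nD2 := fun D => no_gain_back (or_intror (conj (esym e) D)).
by split=> //; move: nD1 nD2; rewrite -!leNgt; lra.
Qed.

Lemma deviate_invariant T n (Phi : profile n -> T) (S : {set 'I_n}) :
  (forall i, i \in S -> forall m mi, Phi (deviate m i mi) = Phi m) ->
  forall m m' : profile n, (forall x, x \notin S -> m x = m' x) -> Phi m = Phi m'.
Proof.
move=> inv m m' agree.
have : {subset enum S <= S} by move=> x; rewrite mem_enum.
have {agree} : forall x, x \notin enum S -> m x = m' x.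
  by move=> x; rewrite mem_enum; apply: agree.
elim: (enum S) m => [|i s IH] m agree_s sub_s.
  by congr Phi; apply/ffunP => x; apply: agree_s.
rewrite -(inv i (sub_s i (mem_head i s)) m (m' i)); apply: IH => [x xs | x xs].
  rewrite ffunE; case: eqVneq => [-> // | xi].
  by apply: agree_s; rewrite in_cons negb_or xi.
by apply: sub_s; rewrite in_cons xs orbT.
Qed.

Lemma ge1_of_weighted_eq (R : realFieldType) (a b x y x' y' : R) :
  0 < a -> 0 <= b -> a * x - b * y = a * x' - b * y' ->
  1 <= x -> x + y <= 1 -> 0 <= y -> 0 <= y' -> 1 <= x'.
Proof. move=> *; nra. Qed.

Section Impossibility.

Variables (R : realType) (wf we : R) (n : nat) (G : network n) (g : mechanism R n).
Hypotheses (wf_gt0 : 0 < wf) (we_gt0 : 0 < we).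
Hypotheses (G_sym : net_symmetric G) (G_bal : structurally_balanced G).
Hypotheses (g_valid : valid g) (g_eff : efficient g) (g_DSIC : DSIC wf we G g).

Local Notation mass m A := (\sum_(j in A) g m j).
Local Notation EF_connect := (connect (EF_edge G)).

Let g_ge0 m j : 0 <= g m j.
Proof. by case/andP: (g_valid.1 m j). Qed.

Lemma mass_ge0 m (A : {set 'I_n}) : 0 <= mass m A.
Proof. exact: sumr_ge0. Qed.

Lemma mass_disjoint_le1 m (A B : {set 'I_n}) :
  [disjoint A & B] -> mass m A + mass m B <= 1.
Proof.
move=> AB; rewrite -bigU //=; apply: le_trans (g_valid.2 m).
by rewrite [leRHS](bigID [predU A & B]) /= lerDl sumr_ge0.
Qed.

Definition faction_score (A B : {set 'I_n}) m := wf * mass m A - we * mass m B.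

Lemma faction_score_deviate (A B : {set 'I_n}) i m mi :
  i \in A -> friends G i = A :\ i -> enemies G i = B ->
  faction_score A B (deviate m i mi) = faction_score A B m.
Proof.
move=> iA defF defE; have [gi score] := DSIC_deviate g_DSIC i m mi.
by rewrite /faction_score !(big_setD1 _ iA) /= -defF -defE gi !mulrDr -!addrA score.
Qed.

Lemma clique_score_agree a (m m' : profile n) :
  (forall x, x \notin friend_clique G a -> m x = m' x) ->
  faction_score (friend_clique G a) (enemies G a) m =
  faction_score (friend_clique G a) (enemies G a) m'.
Proof.
apply: deviate_invariant => i iK m0 mi.
exact: faction_score_deviate (friends_friend_clique G_sym G_bal iK)
  (enemies_friend_clique G_sym G_bal iK).
Qed.

Lemma enemies_score_agree a (m m' : profile n) :
  (forall x, x \notin enemies G a -> m x = m' x) ->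
  faction_score (enemies G a) (friend_clique G a) m =
  faction_score (enemies G a) (friend_clique G a) m'.
Proof.
apply: deviate_invariant => i iE m0 mi.
exact: faction_score_deviate (friends_enemy G_sym G_bal iE) (enemies_enemy G_sym G_bal iE).
Qed.

Lemma clique_mass_ge1 a (m m' : profile n) :
  (forall x, x \notin friend_clique G a -> m x = m' x) ->
  1 <= mass m' (friend_clique G a) -> 1 <= mass m (friend_clique G a).
Proof.
move=> /clique_score_agree/esym eq_score le1.
apply: ge1_of_weighted_eq wf_gt0 (ltW we_gt0) eq_score le1 _ (mass_ge0 _ _) (mass_ge0 _ _).
exact/mass_disjoint_le1/disjoint_friend_clique_enemies.
Qed.

Lemma clique_mass_ge1_enemies a (m m' : profile n) :
  (forall x, x \notin enemies G a -> m x = m' x) ->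
  1 <= mass m' (friend_clique G a) -> 1 <= mass m (friend_clique G a).
Proof.
move=> /enemies_score_agree; rewrite /faction_score => eq_score le1.
have E_ge0 m0 := mass_ge0 m0 (enemies G a).
apply: (ge1_of_weighted_eq we_gt0 (ltW wf_gt0) _ le1 _ (E_ge0 m') (E_ge0 m)).
  by lra.
exact/mass_disjoint_le1/disjoint_friend_clique_enemies.
Qed.

Lemma clique_mass_singleton a : 1 <= mass [ffun=> [set a]] (friend_clique G a).
Proof.
have a_ne0 : [set a] != set0 by apply/set0Pn; exists a; apply: set11.
rewrite -(g_eff a_ne0) big_set1 (big_setD1 _ (friend_clique_id G a)) /=.
by rewrite lerDl mass_ge0.
Qed.

Lemma clique_mass_component a (m : profile n) :
  (forall x, ~~ EF_connect a x -> m x = [set a]) -> 1 <= mass m (friend_clique G a).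
Proof.
move=> outside.
pose mK : profile n := [ffun x => if x \in friend_clique G a then [set a] else m x].
apply: (@clique_mass_ge1 _ _ mK) => [x xK | ]; first by rewrite ffunE (negPf xK).
apply: (clique_mass_ge1_enemies _ (clique_mass_singleton a)) => x xE.
rewrite !ffunE; case: ifP => // xK; apply: outside.
by rewrite (EF_connectE G_sym G_bal) in_setU xK (negPf xE).
Qed.

Lemma disjoint_cliques_not_cover a d :
  [disjoint friend_clique G a & friend_clique G d] ->
  ~ (forall x, EF_connect a x || EF_connect d x).
Proof.
move=> disj cover.
pose m : profile n := [ffun x => if EF_connect a x then [set d] else [set a]].
have Ka : 1 <= mass m (friend_clique G a).
  by apply: clique_mass_component => x /negPf ax; rewrite ffunE ax.
have Kd : 1 <= mass m (friend_clique G d).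
  apply: clique_mass_component => x /negPf dx; rewrite ffunE.
  by have := cover x; rewrite dx orbF => ->.
by have := mass_disjoint_le1 m disj; lra.
Qed.

End Impossibility.

Lemma num_components_of_mechanism (R : realType) (wf we : R) n (G : network n)
    (g : mechanism R n) :
  0 < wf -> 0 < we -> (0 < n)%N -> net_symmetric G -> structurally_balanced G ->
  valid g -> efficient g -> DSIC wf we G g ->
  num_F_components G = 1%N \/ (3 <= num_EF_components G)%N.
Proof.
move=> wf_gt0 we_gt0 n_gt0 G_sym G_bal g_valid g_eff g_DSIC.
have no_cover := disjoint_cliques_not_cover wf_gt0 we_gt0 G_sym G_bal g_valid g_eff g_DSIC.
have EF_sym := sym_connect_sym (EF_edge_sym G_sym).
case: (eqVneq (num_F_components G) 1%N) => [| nF1]; [by left | right].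
rewrite leqNgt; apply/negP => EF_lt3.
have [a [d]] := num_components_neq1 n_gt0 nF1; rewrite (F_connectE G_sym G_bal) => Kd.
have [EF_all | ] := boolP [forall x, connect (EF_edge G) a x].
  have dE : d \in enemies G a.
    by have := forallP EF_all d; rewrite (EF_connectE G_sym G_bal) in_setU (negPf Kd).
  apply: (no_cover a d); last by move=> x; rewrite (forallP EF_all x).
  by rewrite (friend_clique_enemy G_sym G_bal dE) disjoint_friend_clique_enemies.
rewrite negb_forall => /existsP[x nax].
apply: (no_cover a x (disjoint_friend_cliques G_sym G_bal nax)) => y.
apply/negPn/negP; rewrite negb_or => /andP[nay nxy].
by move: EF_lt3; rewrite ltnNge (disconnected3_num_components nax _ nay) // EF_sym.
Qed.

Lemma ord3P (k : 'I_3) : [\/ k = 0, k = 1 | k = 2].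
Proof.
case: k => [[|[|[|]]] // ?]; [constructor 1 | constructor 2 | constructor 3].
all: exact: val_inj.
Qed.

Definition majority3 (T : eqType) (t : 'I_3 -> T) : T :=
  if t 1 == t 2 then t 1 else if t 2 == t 0 then t 2 else t 0.

Lemma majority3_agree (T : eqType) (t : 'I_3 -> T) k k' :
  k != k' -> t k = t k' -> majority3 t = t k.
Proof.
rewrite /majority3; case: (ord3P k) (ord3P k') => -> [] -> // _ E.
all: by case: (t 1 =P t 2) => ?; case: (t 2 =P t 0) => ? //; congruence.
Qed.

Section Mechanisms.

Variables (R : realType) (n : nat).

Lemma valid_of_sum_le1 (g : mechanism R n) :
  (forall m j, 0 <= g m j) -> (forall m, \sum_j g m j <= 1) -> valid g.
Proof.
move=> g_ge0 g_sum; split=> // m j; rewrite g_ge0 /=.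
apply: le_trans (g_sum m); rewrite (bigD1 j) //= lerDl.
by apply: sumr_ge0 => k _; apply: g_ge0.
Qed.

Lemma wpref_eq (wf we : R) (G : network n) i (p p' : 'I_n -> R) :
  p' i = p i ->
  \sum_(j in friends G i) p' j = \sum_(j in friends G i) p j ->
  \sum_(j in enemies G i) p' j = \sum_(j in enemies G i) p j ->
  wpref wf we G i p p'.
Proof.
move=> e_i e_F e_E [|[_]]; first by rewrite e_i ltxx.
by rewrite !sumrB e_F e_E !subrr !mulr0 subrr ltxx.
Qed.

Definition share (j : 'I_n) (N : {set 'I_n}) : R :=
  if j \in N then #|N|%:R^-1 else 0.

Lemma share_ge0 j (N : {set 'I_n}) : 0 <= share j N.
Proof. by rewrite /share; case: ifP; rewrite ?invr_ge0 ?ler0n. Qed.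

Lemma sum_share (N : {set 'I_n}) : N != set0 -> \sum_(j in N) share j N = 1.
Proof.
move=> N_ne0; rewrite (eq_bigr (fun=> #|N|%:R^-1)) => [|j jN]; last by rewrite /share jN.
by rewrite sumr_const -[_ *+ _]mulr_natl mulfV // pnatr_eq0 -lt0n card_gt0.
Qed.

Lemma sum_share_all (N : {set 'I_n}) : \sum_j share j N = \sum_(j in N) share j N.
Proof. by rewrite [RHS]big_mkcond; apply: eq_bigr => j _; rewrite /share; case: ifP. Qed.

Section Referees.

Variables (r : 'I_3 -> 'I_n) (c : 'I_n -> 'I_3).

Definition referee_share (m : profile n) (j : 'I_n) : R :=
  let t k := m (r (lift (c j) k)) in
  if t ord0 == t ord_max then share j (t ord0) else 0.

Lemma referee_share_ge0 m j : 0 <= referee_share m j.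
Proof. by rewrite /referee_share; case: ifP => _; rewrite ?share_ge0. Qed.

Lemma referee_share_le m j : referee_share m j <= share j (majority3 (fun k => m (r k))).
Proof.
rewrite /referee_share; case: eqP => [agree | _]; last exact: share_ge0.
by rewrite (majority3_agree _ agree) // (inj_eq (@lift_inj _ _)).
Qed.

Lemma sum_referee_share m : \sum_j referee_share m j <= 1.
Proof.
apply: le_trans (ler_sum _ (fun j _ => referee_share_le m j)) _.
rewrite sum_share_all; case: (eqVneq (majority3 (fun k => m (r k))) set0) => [-> | ne0].
  by rewrite big_set0.
by rewrite sum_share.
Qed.

Lemma referee_share_truthful (N : {set 'I_n}) j : referee_share [ffun=> N] j = share j N.
Proof. by rewrite /referee_share !ffunE eqxx. Qed.

Lemma referee_share_deviate m i mi j :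
  (forall k, r k = i -> c j = k) -> referee_share (deviate m i mi) j = referee_share m j.
Proof.
move=> not_referee; have ri k : r (lift (c j) k) != i.
  by apply/eqP => /not_referee/eqP; rewrite (negPf (neq_lift _ _)).
by rewrite /referee_share !ffunE !(negPf (ri _)).
Qed.

End Referees.

Definition topped_up (b : mechanism R n) (a : 'I_n) : mechanism R n :=
  fun m j => b m j + (if j == a then 1 - \sum_k b m k else 0).

Lemma sum_topped_up b a m : \sum_j topped_up b a m j = 1.
Proof. by rewrite big_split /= -big_mkcond big_pred1_eq addrC subrK. Qed.

Lemma topped_up_ge0 (b : mechanism R n) a m j :
  (forall j, 0 <= b m j) -> \sum_k b m k <= 1 -> 0 <= topped_up b a m j.
Proof.
move=> b_ge0 b_sum; rewrite /topped_up; case: eqP => _; rewrite ?addr0 //.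
by rewrite addr_ge0 // subr_ge0.
Qed.

Lemma DSIC_all_friends (wf we : R) (G : network n) (g : mechanism R n) :
  (forall x y, x != y -> G x y = Friends) -> (forall m, \sum_j g m j = 1) ->
  (forall i m mi, g (deviate m i mi) i = g m i) -> DSIC wf we G g.
Proof.
move=> all_F g_sum g_own i m mi.
have E_i : enemies G i = set0.
  by apply/setP => j; rewrite !inE; case: eqVneq => //= ji; rewrite all_F // eq_sym.
have sum_F m' : \sum_(j in friends G i) g m' j = 1 - g m' i.
  rewrite -(g_sum m') [in RHS](bigD1 i) //= addrC addrK; apply: eq_bigl => j.
  by rewrite !inE; case: eqVneq => //= ji; rewrite all_F // eq_sym.
by apply: wpref_eq; rewrite ?sum_F ?g_own // E_i !big_set0.
Qed.

End Mechanisms.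

Lemma referee_mechanism_EF (R : realType) (wf we : R) n (G : network n) (r : 'I_3 -> 'I_n) :
  net_symmetric G -> (forall k k', k != k' -> ~~ connect (EF_edge G) (r k) (r k')) ->
  exists g : mechanism R n, valid g /\ efficient g /\ DSIC wf we G g.
Proof.
move=> G_sym r_apart; have EF_sym := sym_connect_sym (EF_edge_sym G_sym).
pose c j := odflt 0 [pick k | connect (EF_edge G) (r k) j].
have cE k j : connect (EF_edge G) (r k) j -> c j = k.
  move=> rkj; rewrite /c; case: pickP => [k' rk'j | /(_ k)]; last by rewrite rkj.
  case: (eqVneq k' k) => // /r_apart/negP[].
  by apply: connect_trans rk'j _; rewrite EF_sym.
exists (referee_share R r c); split; [|split].
- apply: valid_of_sum_le1 => [m j | m]; first exact: referee_share_ge0.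
  exact: sum_referee_share.
- move=> N N_ne0; rewrite (eq_bigr _ (fun j _ => referee_share_truthful R r c N j)).
  exact: sum_share.
have stable i m mi j : connect (EF_edge G) i j ->
    referee_share R r c (deviate m i mi) j = referee_share R r c m j.
  by move=> ij; apply: referee_share_deviate => k rk; apply: cE; rewrite rk.
move=> i m mi; apply: wpref_eq; first exact/stable/connect0.
all: apply: eq_bigr => j; rewrite inE => /andP[ji Rij]; apply/stable/connect1.
all: by rewrite /EF_edge eq_sym ji Rij ?orbT.
Qed.

Lemma all_friends_mechanism (R : realType) (wf we : R) n (G : network n) :
  (4 <= n)%N -> (forall x y, x != y -> G x y = Friends) ->
  exists g : mechanism R n, valid g /\ efficient g /\ DSIC wf we G g.
Proof.
move=> n_ge4 all_F.
pose r (k : 'I_3) : 'I_n := widen_ord (ltnW n_ge4) k.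
pose a : 'I_n := Ordinal n_ge4.
pose c j := odflt 0 [pick k | r k == j].
have cE k j : r k = j -> c j = k.
  move=> rkj; rewrite /c; case: pickP => [k' | /(_ k)]; last by rewrite rkj eqxx.
  by rewrite -rkj => /eqP/(congr1 val) /= /val_inj.
have r_ne_a k : r k != a by rewrite -val_eqE /= neq_ltn ltn_ord.
pose b := referee_share R r c.
exists (topped_up b a); split; [|split].
- apply: valid_of_sum_le1 => [m j | m]; last by rewrite sum_topped_up.
  by apply: topped_up_ge0 => [j'|]; [apply: referee_share_ge0 | apply: sum_referee_share].
- move=> N N_ne0; rewrite -[RHS](sum_share R N_ne0); apply: eq_bigr => j _.
  rewrite /topped_up /b referee_share_truthful.
  rewrite (eq_bigr _ (fun k _ => referee_share_truthful R r c N k)).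
  by rewrite sum_share_all sum_share // subrr if_same addr0.
apply: DSIC_all_friends => // [m | i m mi]; first exact: sum_topped_up.
rewrite /topped_up; case: (eqVneq i a) => [-> | ia].
  have b_a j : b (deviate m a mi) j = b m j.
    by apply: referee_share_deviate => k /eqP; rewrite (negPf (r_ne_a k)).
  by rewrite b_a (eq_bigr _ (fun j _ => b_a j)).
by rewrite /b referee_share_deviate // => k /cE.
Qed.

Unset Implicit Arguments.

Theorem theorem5 (R : realType) (wf we : R) (n : nat) (G : network n) :
  0 < wf -> 0 < we -> (4 <= n)%N ->
  net_symmetric G -> structurally_balanced G ->
  (exists g : mechanism R n, valid g /\ efficient g /\ DSIC wf we G g) <->
  (num_F_components G = 1%N \/ (3 <= num_EF_components G)%N).
Proof.
move=> wf_gt0 we_gt0 n_ge4 G_sym G_bal; have n_gt0 : (0 < n)%N by apply: leq_trans n_ge4.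
split=> [[g [g_valid [g_eff g_DSIC]]] | [F1 | EF3]].
- exact: num_components_of_mechanism g_valid g_eff g_DSIC.
- apply: all_friends_mechanism => // x y xy.
  have : y \in friend_clique G x.
    by rewrite -(F_connectE G_sym G_bal); apply: (num_components_eq1 _ n_gt0).1.
  by rewrite !inE eq_sym (negPf xy) /=; case: (G x y).
- have [r r_apart] := num_components_disconnected3 (sym_connect_sym (EF_edge_sym G_sym)) EF3.
  exact: referee_mechanism_EF G_sym r_apart.
Qed.
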